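(* Consider the centralized caching problem with uncoded prefetching with $N$ files, $K$ users, and local cache size of $M$ files per user, $t=KM/N$, with generalized demands. For every file size $F$, every $\epsilon>0$, and every generalized statistics $\boldsymbol{s}$, $$\min_{\boldsymbol{\mathcal{M}}}R^*_{\epsilon,K}(\boldsymbol{s},\boldsymbol{\mathcal{M}})\ \ge\ \mathrm{Conv}\left(\frac{\binom{K}{t+1}-\binom{K-N_{\mathrm{e}}(\boldsymbol{s})}{t+1}}{\binom{K}{t}}\right)-\left(\frac{1}{F}+N_{\mathrm{e}}^2(\boldsymbol{s})\epsilon\right),$$ where the minimum is over all uncoded prefetchings satisfying the memory constraint and $\mathrm{Conv}(f(t))$ denotes the lower convex envelope of the points $\{(t,f(t)):t\in\{0,1,\dots,K\}\}$, evaluated at $t=KM/N$.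
   Context: Setting: $N$ files of $F$ bits each, all bits i.i.d. Bernoulli$(1/2)$; $K$ users each with $MF$ bits of cache, $M\in[0,N]$. An uncoded prefetching $\boldsymbol{\mathcal{M}}=(\mathcal{M}_1,\dots,\mathcal{M}_K)$: each $\mathcal{M}_k$ is a set of at most $MF$ bit indices and user $k$ stores those bits. A generalized demand is $\boldsymbol{d}=(d_1,\dots,d_K)\in\{0,1,\dots,N\}^K$, where $d_k\neq0$ means user $k$ requests file $W_{d_k}$ and $d_k=0$ means user $k$ makes no request. A rate $R$ is $\epsilon$-achievable for $\boldsymbol{\mathcal{M}},\boldsymbol{d}$ if there are an encoder $X=\psi(W_1,\dots,W_N)\in\{0,1\}^{RF}$ and decoders such that each requesting user $k$ recovers $W_{d_k}$ from $X$ and its cached bits with error probability at most $\epsilon$; $R^*_{\epsilon,K}(\boldsymbol{d},\boldsymbol{\mathcal{M}})$ is the minimum such rate. The statistics of a generalized demand is the length-$N$ array, sorted nonincreasingly, whose $i$-th entry is the number of users requesting the $i$-th most requested file; the generalized type $\mathcal{D}_{\boldsymbol{s}}$ is the set of generalized demands with statistics $\boldsymbol{s}$; $N_{\mathrm{e}}(\boldsymbol{s})$ is the number of distinct requested files. $R^*_{\epsilon,K}(\boldsymbol{s},\boldsymbol{\mathcal{M}})$ is the average of $R^*_{\epsilon,K}(\boldsymbol{d},\boldsymbol{\mathcal{M}})$ over $\boldsymbol{d}\in\mathcal{D}_{\boldsymbol{s}}$. Convention: $\binom{n}{k}=0$ when $k>n$. *)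

From HB Require Import structures.
From mathcomp Require Import all_boot all_order all_algebra.
From mathcomp Require Import boolp classical_sets reals.
Set Implicit Arguments. Unset Strict Implicit. Unset Printing Implicit Defensive.
Import Order.TTheory GRing.Theory Num.Theory.
Local Open Scope ring_scope.

(* Bit indices: bit j of file n is (n, j), n : 'I_N, j : 'I_F.
   A realization of the library is a finite function w on bit indices;
   the N*F bits are i.i.d. Bernoulli(1/2), i.e. w is uniform. *)
Definition lib (N F : nat) := {ffun 'I_N * 'I_F -> bool}.

Definition file (N F : nat) (w : lib N F) (n : 'I_N) : {ffun 'I_F -> bool} :=
  [ffun j => w (n, j)].

Definition prefetching (N F K : nat) := 'I_K -> {set 'I_N * 'I_F}.

(* A generalized demand: d k = 0 means no request, d k = j (j >= 1) means
   user k requests file W_j, i.e. the file of index j-1 : 'I_N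
   (computed by unlift ord0). *)
Definition gdemand (N K : nat) := {ffun 'I_K -> 'I_N.+1}.

Definition prob {R : realType} (N F : nat) (A : {set lib N F}) : R :=
  #|A|%:R / #|{: lib N F}|%:R.

(* Rate L/F (i.e. L transmitted bits) is eps-achievable for (Mc, d). *)
Definition achievable {R : realType} (N F K : nat) (Mc : prefetching N F K)
    (d : gdemand N K) (eps : R) (L : nat) : Prop :=
  exists psi : lib N F -> {ffun 'I_L -> bool},
    forall (k : 'I_K) (n : 'I_N), unlift ord0 (d k) = Some n ->
    exists phi : {ffun 'I_L -> bool} -> lib N F -> {ffun 'I_F -> bool},
      (* the decoder of user k only uses X and the cached bits *)
      (forall x (w w' : lib N F),
          (forall b, b \in Mc k -> w b = w' b) -> phi x w = phi x w')
      /\ prob [set w : lib N F | phi (psi w) w != file w n] <= eps.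

(* Minimum eps-achievable rate R*_{eps,K}(d, Mc).  Sending all N*F bits is
   always achievable, so the minimum over L in [0, N*F] is the true minimum. *)
Definition Rstar {R : realType} (N F K : nat) (Mc : prefetching N F K)
    (d : gdemand N K) (eps : R) : R :=
  (\big[minn/(N * F)%N]_(L < (N * F).+1 | `[< achievable Mc d eps L >]) L)%:R
  / F%:R.

Definition stats (N K : nat) (d : gdemand N K) : seq nat :=
  sort (fun a b : nat => (b <= a)%N)
    [seq #|[set k | d k == lift ord0 n]| | n <- enum 'I_N].

Definition Ne (s : seq nat) : nat := count (fun x => (0 < x)%N) s.

Definition Rstar_type {R : realType} (N F K : nat) (Mc : prefetching N F K)
    (eps : R) (s : seq nat) : R :=
  (\sum_(d : gdemand N K | stats d == s) Rstar Mc d eps)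
  / #|[set d : gdemand N K | stats d == s]|%:R.

Definition fbound {R : realType} (K ne t : nat) : R :=
  ('C(K, t.+1)%:R - 'C(K - ne, t.+1)%:R) / 'C(K, t)%:R.

Definition Conv {R : realType} (K : nat) (f : nat -> R) (x : R) : R :=
  inf [set y : R | exists lam : 'I_K.+1 -> R,
         (forall i, 0 <= lam i) /\ \sum_i lam i = 1 /\
         \sum_(i : 'I_K.+1) lam i * (i : nat)%:R = x /\
         y = \sum_(i : 'I_K.+1) lam i * f i].

(* Fix a demand with [ne] requested files and choose users [u_0, ..., u_(ne-1)]
   requesting distinct files [n_0, ..., n_(ne-1)].  Let [B] be the set of bits of
   the files [n_i] that none of [u_0, ..., u_i] caches.  With probability at least
   [1 - ne eps] every [u_i] decodes correctly; then the files [n_0, n_1, ...] can be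
   recovered in turn from the transmission and the bits outside [B], because the
   cache of [u_i] meets [B] only inside the files already recovered.  Counting
   library realizations gives [L >= |B| (1 - ne eps) - 1] for every achievable
   length [L].  Relabelling users and files preserves the demand type, and the
   average of [|B|] over all relabellings is [F] times the mean of
   [f(t_x) = (C(K, t_x + 1) - C(K - ne, t_x + 1)) / C(K, t_x)] over the bits [x],
   where [t_x] is the number of users caching [x].  The cache-size constraint
   bounds the mean of [t_x] by [KM/N], so this mean of [f] dominates the lower
   convex envelope at [KM/N]. *)
From HB Require Import structures.
From mathcomp Require Import all_boot all_order all_algebra.
From mathcomp Require Import boolp classical_sets reals.
From mathcomp Require Import perm action primitive_action alt.
From mathcomp Require Import zify ring lra.
Set Implicit Arguments. Unset Strict Implicit. Unset Printing Implicit Defensive.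
Import Order.TTheory GRing.Theory Num.Theory.
Local Open Scope ring_scope.

Lemma lin_le_of_exp2_le (R : realFieldType) (b L : nat) (c : R) :
  c <= 1 -> (2 ^ b)%:R * c <= (2 ^ L)%:R -> b%:R * c - 1 <= L%:R.
Proof.
move=> c_le1 exp_le; have b_ge0 : (0 : R) <= b%:R by [].
case: (leqP b L) => [b_le | /ltnW L_le].
  have : (b%:R : R) <= L%:R by rewrite ler_nat.
  nra.
move: exp_le; have [j ->] : exists j, b = (L + j)%N by exists (b - L)%N; lia.
move=> exp_le; have jc_le1 : j%:R * c <= 1 :> R.
  have j_le : (j%:R : R) <= (2 ^ j)%:R by rewrite ler_nat ltnW // ltn_expl.
  have L2_gt0 : (0 : R) < (2 ^ L)%:R by rewrite ltr0n expn_gt0.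
  have : (2 ^ j)%:R * c <= 1 :> R.
    by rewrite -(ler_pM2l L2_gt0) mulr1 mulrA -natrM -expnD.
  have : (0 : R) <= j%:R by [].
  case: (lerP 0 c); nra.
rewrite natrD; have : (0 : R) <= L%:R by [].
nra.
Qed.

Lemma card_bigcup_le (I T : finType) (A : I -> {set T}) :
  (#|\bigcup_i A i| <= \sum_i #|A i|)%N.
Proof.
elim/big_ind2: _ => // [|n1 A1 n2 A2 h1 h2]; first by rewrite cards0.
exact: leq_trans (leq_card_setU A1 A2).1 (leq_add h1 h2).
Qed.

Lemma sum_nat_bool (T : finType) (P : pred T) : (\sum_x (P x : nat) = #|[set x | P x]|)%N.
Proof. by rewrite -sum1dep_card [RHS]big_mkcond; apply: eq_bigr => x _; case: (P x). Qed.

Lemma ffactD n a b : n ^_ (a + b) = (n ^_ a * (n - a) ^_ b)%N.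
Proof.
elim: b => [|b IH]; first by rewrite addn0 muln1.
by rewrite addnS !ffactnSr IH subnDA mulnA.
Qed.

Lemma ffact_subn_bin n k m : ((n - k) ^_ m * 'C(n, k) = n ^_ m * 'C(n - m, k))%N.
Proof.
apply/eqP; rewrite -(eqn_pmul2r (fact_gt0 k)) -!mulnA !bin_ffact mulnC -!ffactD.
by rewrite addnC.
Qed.

Lemma sum_bin_subn n k m : (m <= n)%N ->
  (\sum_(i < m) 'C(n - i.+1, k) + 'C(n - m, k.+1) = 'C(n, k.+1))%N.
Proof.
elim: m => [|m IH] lt_mn; first by rewrite big_ord0 subn0.
rewrite big_ord_recr /= -addnA [X in (_ + X)%N]addnC -binS -IH 1?ltnW //.
by rewrite subnSK.
Qed.

(* The [i]-th term is the probability that [i.+1] distinct users drawn uniformly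
   at random all miss a fixed set of [t] users. *)
Lemma fbound_ffact (R : realType) K ne t : (ne <= K)%N -> (t <= K)%N ->
  fbound K ne t = \sum_(i < ne) ((K - t) ^_ i.+1)%:R / (K ^_ i.+1)%:R :> R.
Proof.
move=> ne_le t_le; rewrite /fbound -(sum_bin_subn t ne_le) natrD addrK natr_sum mulr_suml.
apply: eq_bigr => i _; have i_lt : (i < K)%N by apply: leq_trans ne_le.
apply/eqP; rewrite eqr_div ?pnatr_eq0 -?lt0n ?bin_gt0 ?ffact_gt0 // -!natrM.
by rewrite eqr_nat mulnC ffact_subn_bin.
Qed.

Section PermCounting.
Variable T : finType.

Lemma card_perms : #|{: {perm T}}| = (#|T|)`!.
Proof. by rewrite -card_Sym -cardsT. Qed.

Lemma perm_map_uniq_tuple m (u v : m.-tuple T) :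
  uniq u -> uniq v -> exists t : {perm T}, map t u = v.
Proof.
move=> uu uv; have m_le : (m <= #|T|)%N by rewrite -(size_tuple u) -(card_uniqP uu) max_card.
have dt (w : m.-tuple T) : uniq w -> w \in m.-dtuple([set: T]).
  by move=> uw; rewrite inE uw; apply/fintype.subsetP => x; rewrite finset.in_setT.
have [t _ ->] := atransP2 (ntransitive_weak m_le (Sym_trans T)) (dt _ uu) (dt _ uv).
by exists t.
Qed.

(* Double counting of the pairs [(s, v)] of a permutation and a duplicate-free
   tuple with [map s v] in [A], using that the permutations act transitively on
   duplicate-free tuples. *)
Lemma card_perms_into m (u : m.-tuple T) (A : {pred T}) : uniq u ->
  (#|T| ^_ m * #|[set s : {perm T} | all A (map s u)]| = (#|T|)`! * #|A| ^_ m)%N.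
Proof.
move=> uu; pose into (v : seq T) := [set s : {perm T} | all A (map s v)].
have into_const (v : m.-tuple T) : uniq v -> #|into v| = #|into u|.
  move=> uv; have [t <-] := perm_map_uniq_tuple uu uv.
  rewrite -[RHS](card_preimset _ (mulgI t)); apply: eq_card => s.
  by rewrite !inE -map_comp; congr (all A _); apply: eq_map => x; rewrite /= permM.
have card_uniq : #|[set v : m.-tuple T | uniq v]| = (#|T| ^_ m)%N.
  by rewrite -(@card_uniq_tuples _ _ predT); apply: eq_card => v; rewrite !inE all_predT.
rewrite -card_uniq -sum_nat_const.
under eq_bigr => v /[!inE] /into_const <- do rewrite -sum1dep_card.
rewrite (exchange_big_dep predT) //= -card_perms -card_uniq_tuples -sum_nat_const.
apply: eq_bigr => s _; rewrite -sum1dep_card.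
rewrite [RHS](reindex_inj (h := fun v : m.-tuple T => [tuple of map s v])) /=.
  by apply: eq_bigl => v; rewrite inE andbC map_inj_uniq //; apply: perm_inj.
move=> v1 v2 /(congr1 val) /(inj_map (@perm_inj _ s)); exact: val_inj.
Qed.

Lemma card_perms_to (a b : T) : (#|[set p : {perm T} | p a == b]| * #|T| = (#|T|)`!)%N.
Proof.
have := @card_perms_into 1 [tuple a] (pred1 b) isT.
rewrite ffactn1 card1 ffactn1 muln1 mulnC => <-; congr (_ * _)%N.
by apply: eq_card => p; rewrite !inE /= andbT.
Qed.

Lemma card_perms_avoid ne (u : 'I_ne -> T) (C : {set T}) (i : 'I_ne) : injective u ->
  (#|T| ^_ i.+1 * #|[set s : {perm T} | [forall (l : 'I_ne | (l <= i)%N), s (u l) \notin C]]|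
   = (#|T|)`! * (#|T| - #|C|) ^_ i.+1)%N.
Proof.
move=> u_inj; pose v := [tuple u (widen_ord (ltn_ord i) l) | l < i.+1].
have uv : uniq v.
  rewrite /v /= map_inj_uniq ?enum_uniq // => a b /u_inj /(congr1 val) /=.
  exact: val_inj.
have cardCC : #|~: C| = (#|T| - #|C|)%N by rewrite cardsCs finset.setCK.
have := card_perms_into (~: C) uv; rewrite cardCC => <-; congr (_ * _)%N.
apply: eq_card => s; rewrite !inE; apply/forall_inP/allP => [avoid x|into l li].
  case/mapP=> _ /mapP [l _ ->] ->.
  by have := avoid (widen_ord (ltn_ord i) l) (ltn_ord l); rewrite -finset.in_setC.
have mem : s (u l) \in [seq s x | x <- v].
  apply/mapP; exists (u l) => //; apply/mapP; exists (Ordinal (li : (l < i.+1)%N)).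
    by rewrite mem_enum.
  by congr u; apply: val_inj.
have : s (u l) \in ~: C := into _ mem.
by rewrite finset.in_setC.
Qed.

End PermCounting.

Section Probability.
Variables (R : realType) (N F : nat).

Lemma card_lib_gt0 : (0 < #|{: lib N F}|)%N.
Proof. by apply/card_gt0P; exists [ffun=> false]. Qed.

Lemma probC (A : {set lib N F}) : prob (~: A) = 1 - prob A :> R.
Proof.
have lib0 : #|{: lib N F}|%:R != 0 :> R by rewrite pnatr_eq0 -lt0n card_lib_gt0.
rewrite /prob; have -> : #|~: A|%:R = #|{: lib N F}|%:R - #|A|%:R :> R.
  by apply/eqP; rewrite eq_sym subr_eq -natrD addnC cardsC.
by rewrite mulrBl divff.
Qed.

Lemma prob_bigcup_le (I : finType) (E : I -> {set lib N F}) :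
  prob (\bigcup_i E i) <= \sum_i prob (E i) :> R.
Proof.
rewrite /prob -mulr_suml ler_pM2r ?invr_gt0 ?ltr0n ?card_lib_gt0 //.
by rewrite -natr_sum ler_nat card_bigcup_le.
Qed.

End Probability.

Section Decoding.
Variables (N F K : nat) (Mc : prefetching N F K).

Definition cachers (x : 'I_N * 'I_F) : {set 'I_K} := [set k | x \in Mc k].

Variables (ne : nat) (nsel : 'I_ne -> 'I_N) (usel : 'I_ne -> 'I_K).

Definition uncached_upto (x : 'I_N * 'I_F) (i : 'I_ne) :=
  [forall (l : 'I_ne | (l <= i)%N), usel l \notin cachers x].

Definition uncached_bits : {set 'I_N * 'I_F} :=
  [set x | [exists i, (x.1 == nsel i) && uncached_upto x i]].

Lemma card_uncached_bits_le : (#|uncached_bits| <= ne * F)%N.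
Proof.
have sub : uncached_bits \subset finset.setX (nsel @: [set: 'I_ne]) [set: 'I_F].
  apply/fintype.subsetP => x; rewrite !inE andbT => /existsP [i /andP [/eqP -> _]].
  by rewrite imset_f ?inE.
rewrite (leq_trans (subset_leq_card sub)) // cardsX cardsT card_ord leq_mul2r.
by rewrite (leq_trans (leq_imset_card _ _)) ?cardsT ?card_ord ?orbT.
Qed.

Definition erase (B : {set 'I_N * 'I_F}) (w : lib N F) : lib N F :=
  [ffun x => (x \notin B) && w x].

Section Decoders.
Variables (L : nat) (psi : lib N F -> {ffun 'I_L -> bool})
  (phi : 'I_ne -> {ffun 'I_L -> bool} -> lib N F -> {ffun 'I_F -> bool}).
Hypothesis phi_cache : forall i y (w w' : lib N F),
  (forall b, b \in Mc (usel i) -> w b = w' b) -> phi i y w = phi i y w'.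

Definition decoded_all : {set lib N F} :=
  [set w | [forall i, phi i (psi w) w == file w (nsel i)]].

(* Recover the files [nsel 0, nsel 1, ...] in turn: the cache of [usel i] meets
   [uncached_bits] only inside the files [nsel j] with [j < i]. *)
Lemma erase_transmit_inj :
  {in decoded_all &, injective (fun w => (erase uncached_bits w, psi w))}.
Proof.
move=> w1 w2; rewrite !inE => /forallP ok1 /forallP ok2 [e_erase e_psi].
have outside x : x \notin uncached_bits -> w1 x = w2 x.
  by move=> xB; have := congr1 (fun w : lib N F => w x) e_erase; rewrite !ffunE xB.
have bit_of_file i x : x.1 = nsel i -> file w1 (nsel i) = file w2 (nsel i) -> w1 x = w2 x.
  by case: x => n j /= -> /(congr1 (fun f : {ffun 'I_F -> bool} => f j)); rewrite !ffunE.
have files_agree n (i : 'I_ne) : i = n :> nat -> file w1 (nsel i) = file w2 (nsel i).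
  elim/ltn_ind: n i => n IH i iE.
  rewrite -(eqP (ok1 i)) -(eqP (ok2 i)) e_psi; apply: phi_cache => b bM.
  case: (boolP (b \in uncached_bits)); last exact: outside.
  rewrite inE => /existsP [j /andP [/eqP bj /forall_inP unc]].
  have ji : (j < i)%N.
    by rewrite ltnNge; apply: contraT; rewrite negbK => /unc; rewrite inE bM.
  by apply: (bit_of_file j) => //; apply: (IH j) => //; rewrite -iE.
apply/ffunP => x; case: (boolP (x \in uncached_bits)); last exact: outside.
rewrite inE => /existsP [i /andP [/eqP x1 _]].
exact: bit_of_file x1 (files_agree i i erefl).
Qed.

Lemma card_decoded_all_le :
  (#|decoded_all| <= 2 ^ #|~: uncached_bits| * 2 ^ L)%N.
Proof.
rewrite -(card_in_imset erase_transmit_inj).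
have sub : [set (erase uncached_bits w, psi w) | w in decoded_all] \subset
    finset.setX [set g in pffun_on false (~: uncached_bits) predT]
                [set: {ffun 'I_L -> bool}].
  apply/fintype.subsetP => _ /imsetP [w _ ->]; rewrite !inE andbT.
  apply/pffun_onP; split=> //; apply/fintype.subsetP => x.
  by rewrite finset.in_setC unfold_in ffunE; case: (x \in uncached_bits).
rewrite (leq_trans (subset_leq_card sub)) // cardsX cardsE card_pffun_on cardsT.
by rewrite card_ffun card_bool card_ord.
Qed.

End Decoders.

Variables (R : realType) (d : gdemand N K) (eps : R).
Hypothesis usel_requests : forall i, d (usel i) = lift ord0 (nsel i).

Lemma achievable_exp2_le L : achievable Mc d eps L ->
  (2 ^ #|uncached_bits|)%:R * (1 - ne%:R * eps) <= (2 ^ L)%:R :> R.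
Proof.
case=> psi achieve.
have /fin_all_exists [phi phiP] i : exists phi,
    (forall y (w w' : lib N F), (forall b, b \in Mc (usel i) -> w b = w' b) ->
       phi y w = phi y w')
    /\ prob [set w | phi (psi w) w != file w (nsel i)] <= eps.
  by apply: achieve; rewrite usel_requests liftK.
set G := decoded_all psi phi.
have probG : 1 - ne%:R * eps <= prob G :> R.
  have -> : G = ~: \bigcup_i [set w | phi i (psi w) w != file w (nsel i)].
    apply/setP => w; rewrite finset.setC_bigcup inE.
    apply/forallP/finset.bigcapP => [ok i _ | ok i]; first by rewrite !inE negbK ok.
    by have := ok i isT; rewrite !inE negbK.
  rewrite probC lerD2l lerN2 (le_trans (prob_bigcup_le _ _)) //.
  apply: le_trans (ler_sum _ (fun i _ => (phiP i).2)) _.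
  by rewrite sumr_const card_ord mulr_natl.
have libE : #|{: lib N F}| = (2 ^ #|uncached_bits| * 2 ^ #|~: uncached_bits|)%N.
  by rewrite cardT -cardE card_ffun card_bool -expnD cardsC.
have c2 : (0 : R) < (2 ^ #|~: uncached_bits|)%:R by rewrite ltr0n expn_gt0.
rewrite -(ler_pM2r c2) mulrAC -natrM -libE.
apply: le_trans (_ : #|G|%:R <= _); last first.
  by rewrite -natrM mulnC ler_nat card_decoded_all_le // => i; apply: (phiP i).1.
have lib0 : (0 : R) < #|{: lib N F}|%:R by rewrite ltr0n card_lib_gt0.
by move: probG; rewrite /prob -(ler_pM2l lib0) mulrCA divff ?mulr1 // gt_eqF.
Qed.

Lemma Rstar_ge_uncached : (0 < F)%N -> 0 <= eps ->
  #|uncached_bits|%:R / F%:R - (F%:R^-1 + ne%:R ^+ 2 * eps) <= Rstar Mc d eps.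
Proof.
move=> F_gt0 eps_ge0; set b := #|uncached_bits|.
have FR_gt0 : (0 : R) < F%:R by rewrite ltr0n.
have ne_eps : (0 : R) <= ne%:R * eps by rewrite mulr_ge0.
have b_neF : (b%:R : R) <= ne%:R * F%:R by rewrite -natrM ler_nat card_uncached_bits_le.
have b_NF : (b%:R : R) <= (N * F)%:R.
  by rewrite ler_nat (leq_trans (max_card _)) // card_prod !card_ord.
have min_ge : b%:R * (1 - ne%:R * eps) - 1 <=
    (\big[minn/(N * F)%N]_(L < (N * F).+1 | `[< achievable Mc d eps L >]) L)%:R.
  apply: (big_ind (fun m : nat => _ <= m%:R)) => [|x y hx hy|L /asboolP ach].
  - have : (0 : R) <= b%:R by [].
    nra.
  - by case: leqP.
  - by apply: lin_le_of_exp2_le (achievable_exp2_le ach); lra.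
rewrite /Rstar; apply: le_trans (_ : (b%:R * (1 - ne%:R * eps) - 1) / F%:R <= _).
  have : b%:R * (ne%:R * eps) / F%:R <= ne%:R ^+ 2 * eps :> R.
    by rewrite ler_pdivrMr // expr2; nra.
  by rewrite mulrBl mulrBr mulr1; lra.
by rewrite ler_pM2r ?invr_gt0.
Qed.

End Decoding.


Section DemandAction.
Variables (N K : nat).
Implicit Type d : gdemand N K.

(* [lift_perm ord0 ord0 p] relabels the requested files by [p] and fixes the
   value [ord0], which encodes "no request". *)
Definition act_demand (p : {perm 'I_N}) (s : {perm 'I_K}) d : gdemand N K :=
  [ffun k => lift_perm ord0 ord0 p (d ((s^-1)%g k))].

Lemma act_demand_inj p s : injective (act_demand p s).
Proof.
move=> d1 d2 /ffunP e; apply/ffunP => k.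
by have := e (s k); rewrite !ffunE permK => /perm_inj.
Qed.

Definition requests d (n : 'I_N) := #|[set k | d k == lift ord0 n]|.

Lemma requests_act_demand p s d n :
  requests (act_demand p s d) n = requests d ((p^-1)%g n).
Proof.
rewrite /requests -[RHS](card_preimset _ (@perm_inj _ (s^-1)%g)); apply: eq_card => k.
rewrite !inE ffunE -{1}[n](permKV p) -(lift_perm_lift ord0 ord0).
by rewrite (inj_eq (@perm_inj _ _)).
Qed.

Lemma stats_act_demand p s d : stats (act_demand p s d) = stats d.
Proof.
rewrite /stats; apply/perm_sortP.
- by move=> a b; apply: leq_total.
- by move=> a b c h1 h2; apply: leq_trans h2 h1.
- by move=> a b /andP [h1 h2]; apply/eqP; rewrite eqn_leq h1 h2.
rewrite (eq_map (requests_act_demand p s d)) map_comp perm_map // uniq_perm ?enum_uniq //.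
  by rewrite map_inj_uniq ?enum_uniq //; apply: perm_inj.
by move=> n; rewrite mem_enum; apply/mapP; exists (p n); rewrite ?mem_enum ?permK.
Qed.

Lemma Ne_stats d : Ne (stats d) = #|[set n | (0 < requests d n)%N]|.
Proof.
rewrite /Ne /stats count_sort count_map cardE /enum_mem size_filter count_filter.
by apply: eq_count => n; rewrite !inE andbT.
Qed.

Lemma demand_representatives d :
  exists (nsel : 'I_(Ne (stats d)) -> 'I_N) (usel : 'I_(Ne (stats d)) -> 'I_K),
    injective nsel /\ forall i, d (usel i) = lift ord0 (nsel i).
Proof.
pose nsel i := enum_val (cast_ord (Ne_stats d) i).
have /fin_all_exists [usel usel_req] i : exists k, d k = lift ord0 (nsel i).
  have := enum_valP (cast_ord (Ne_stats d) i); rewrite inE => /card_gt0P [k].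
  by rewrite inE => /eqP; exists k.
by exists nsel, usel; split=> // i j /enum_val_inj /cast_ord_inj.
Qed.

Lemma sum_type_act_demand (R : realType) (f : gdemand N K -> R) (st : seq nat) :
  \sum_(d | stats d == st) \sum_(s : {perm 'I_K}) \sum_(p : {perm 'I_N})
     f (act_demand p s d) = (K`! * N`!)%:R * \sum_(d | stats d == st) f d.
Proof.
rewrite exchange_big /=; under eq_bigr do rewrite exchange_big /=.
transitivity (\sum_(s : {perm 'I_K}) \sum_(p : {perm 'I_N}) \sum_(d | stats d == st) f d).
  apply: eq_bigr => s _; apply: eq_bigr => p _.
  rewrite [RHS](reindex_inj (@act_demand_inj p s)) /=.
  by apply: eq_bigl => d; rewrite stats_act_demand.
by rewrite !sumr_const !card_perms !card_ord -mulrnA mulr_natl mulnC.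
Qed.

End DemandAction.

Section UncachedCount.
Variables (N F K : nat) (Mc : prefetching N F K) (ne : nat).
Variables (nsel : 'I_ne -> 'I_N) (usel : 'I_ne -> 'I_K).
Hypotheses (nsel_inj : injective nsel) (usel_inj : injective usel).

Lemma card_uncached_bits (s : {perm 'I_K}) (p : {perm 'I_N}) :
  #|uncached_bits Mc (fun i => p (nsel i)) (fun i => s (usel i))| =
  (\sum_x \sum_i ((p (nsel i) == x.1) && uncached_upto Mc (fun l => s (usel l)) x i))%N.
Proof.
rewrite -sum_nat_bool; apply: eq_bigr => x _ /=.
case: existsP => [[i /andP [/eqP x1 avoid]] | none].
  rewrite (bigD1 i) //= x1 eqxx avoid big1 // => j ji.
  by rewrite (inj_eq (inj_comp (@perm_inj _ p) nsel_inj)) (negbTE ji).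
rewrite big1 // => i _; apply/eqP; rewrite eqb0; apply/negP => /andP [/eqP x1 avoid].
by apply: none; exists i; rewrite x1 eqxx.
Qed.

Lemma sum_card_uncached_bits :
  (\sum_(s : {perm 'I_K}) \sum_(p : {perm 'I_N})
      #|uncached_bits Mc (fun i => p (nsel i)) (fun i => s (usel i))| =
   \sum_x \sum_i #|[set p : {perm 'I_N} | p (nsel i) == x.1]| *
                 #|[set s : {perm 'I_K} | uncached_upto Mc (fun l => s (usel l)) x i]|)%N.
Proof.
rewrite (eq_bigr _ (fun s _ => eq_bigr _ (fun p _ => card_uncached_bits s p))).
under eq_bigr do rewrite exchange_big /=.
rewrite exchange_big /=; apply: eq_bigr => x _.
under eq_bigr do rewrite exchange_big /=.
rewrite exchange_big /=; apply: eq_bigr => i _.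
rewrite -!sum_nat_bool big_distrlr exchange_big /=.
by apply: eq_bigr => s _; apply: eq_bigr => p _; rewrite mulnb.
Qed.

Lemma sum_uncached_bits_fbound (R : realType) : (0 < N)%N ->
  \sum_(s : {perm 'I_K}) \sum_(p : {perm 'I_N})
     #|uncached_bits Mc (fun i => p (nsel i)) (fun i => s (usel i))|%:R =
  (K`! * N`!)%:R / N%:R * \sum_x fbound K ne #|cachers Mc x| :> R.
Proof.
move=> N_gt0; have ne_le : (ne <= K)%N by have := leq_card _ usel_inj; rewrite !card_ord.
under eq_bigr do rewrite -natr_sum.
rewrite -natr_sum sum_card_uncached_bits natr_sum mulr_sumr; apply: eq_bigr => x _.
have t_le : (#|cachers Mc x| <= K)%N by rewrite (leq_trans (max_card _)) ?card_ord.
rewrite fbound_ffact // natr_sum mulr_sumr; apply: eq_bigr => i _.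
have i_lt : (i < K)%N by apply: leq_trans ne_le.
have N0 : (N%:R : R) != 0 by rewrite pnatr_eq0 -lt0n.
have K0 : ((K ^_ i.+1)%:R : R) != 0 by rewrite pnatr_eq0 -lt0n ffact_gt0.
have cardP : #|[set p : {perm 'I_N} | p (nsel i) == x.1]|%:R = N`!%:R / N%:R :> R.
  by have := card_perms_to (nsel i) x.1; rewrite card_ord => <-; rewrite natrM mulfK.
have cardS : #|[set s : {perm 'I_K} | uncached_upto Mc (fun l => s (usel l)) x i]|%:R =
    K`!%:R * ((K - #|cachers Mc x|) ^_ i.+1)%:R / (K ^_ i.+1)%:R :> R.
  have := card_perms_avoid (cachers Mc x) i usel_inj; rewrite card_ord => count_eq.
  by rewrite -natrM -count_eq natrM mulrC mulKf.
by rewrite natrM cardP cardS natrM; field; rewrite N0 K0.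
Qed.

End UncachedCount.

(* Moving the mass [th] of [lam] to the point [K], where [f] vanishes, raises
   the mean to exactly [x] without increasing the value, as [f >= 0]. *)
Lemma Conv_le_mix (R : realType) K (f : nat -> R) (x : R) (lam : 'I_K.+1 -> R) :
  (forall i : 'I_K.+1, 0 <= f i) -> f K = 0 ->
  (forall i, 0 <= lam i) -> \sum_i lam i = 1 ->
  \sum_i lam i * (i : nat)%:R <= x -> x <= K%:R ->
  Conv K f x <= \sum_i lam i * f i.
Proof.
move=> f_ge0 fK lam_ge0 lam1 mean_le x_le.
set mu := \sum_i lam i * (i : nat)%:R in mean_le.
have [th [th_ge0 th_le1 th_mean]] :
    exists th, [/\ 0 <= th, th <= 1 & (1 - th) * mu + th * K%:R = x].
  case: (ltrP mu K%:R) => [mu_lt | K_le]; last by exists 0; split; lra.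
  exists ((x - mu) / (K%:R - mu)); have Kmu : 0 < K%:R - mu by rewrite subr_gt0.
  split; first by rewrite divr_ge0 ?subr_ge0 // ltW.
    by rewrite ler_pdivrMr // mul1r; lra.
  by field; rewrite gt_eqF.
pose lam' i := (1 - th) * lam i + th * (i == ord_max)%:R.
have mix (g : 'I_K.+1 -> R) :
    \sum_i lam' i * g i = (1 - th) * \sum_i lam i * g i + th * g ord_max.
  rewrite (eq_bigr (fun i => (1 - th) * (lam i * g i) + th * ((i == ord_max)%:R * g i)));
    last by move=> i _; rewrite /lam'; ring.
  rewrite big_split /= -!mulr_sumr; congr (_ + _ * _).
  rewrite (bigD1 ord_max) //= eqxx mul1r big1 ?addr0 // => i /negbTE ->.
  by rewrite mul0r.
rewrite /Conv; set hull := (X in inf X).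
have in_hull : hull ((1 - th) * \sum_i lam i * f i).
  exists lam'; split; first by move=> i; rewrite addr_ge0 ?mulr_ge0 ?subr_ge0.
  split.
    have := mix (fun=> 1); under eq_bigr do rewrite mulr1.
    by move=> ->; under eq_bigr do rewrite mulr1; rewrite lam1; ring.
  by split; rewrite mix /= ?fK ?mulr0 ?addr0.
apply: le_trans (ge_inf _ in_hull) _.
  exists 0 => _ [l [l_ge0 [_ [_ ->]]]]; apply: sumr_ge0 => i _; exact: mulr_ge0.
have : 0 <= \sum_i lam i * f i by apply: sumr_ge0 => i _; apply: mulr_ge0.
nra.
Qed.

Section CacheProfile.
Variables (R : realType) (N F K : nat) (Mc : prefetching N F K).

Lemma sum_cachers_by_size (g : nat -> R) :
  \sum_x g #|cachers Mc x| =
  \sum_(t < K.+1) #|[set x | #|cachers Mc x| == t]|%:R * g t.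
Proof.
rewrite (partition_big (fun x => inord #|cachers Mc x| : 'I_K.+1) predT) //=.
apply: eq_bigr => t _.
have size_eq x : (inord #|cachers Mc x| == t) = (#|cachers Mc x| == t).
  by rewrite -(inj_eq val_inj) /= inordK // ltnS (leq_trans (max_card _)) ?card_ord.
rewrite (eq_bigl _ _ size_eq) (eq_bigr (fun=> g t)) => [|x /eqP -> //].
by rewrite sumr_const mulr_natl cardsE.
Qed.

Lemma sum_card_cachers : (\sum_x #|cachers Mc x| = \sum_k #|Mc k|)%N.
Proof.
under eq_bigr do rewrite -sum_nat_bool.
rewrite exchange_big; apply: eq_bigr => k _; rewrite sum_nat_bool.
by apply: eq_card => x; rewrite inE.
Qed.

Lemma Conv_le_avg_fbound ne (M : R) : (0 < N)%N -> (0 < F)%N -> M <= N%:R ->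
  (forall k, #|Mc k|%:R <= M * F%:R) ->
  Conv K (fbound K ne) (K%:R * M / N%:R) <=
  (\sum_x fbound K ne #|cachers Mc x|) / (N%:R * F%:R).
Proof.
move=> N_gt0 F_gt0 M_le cache_size.
have NFp : (0 : R) < N%:R * F%:R by rewrite -natrM ltr0n muln_gt0 N_gt0.
pose lam (t : 'I_K.+1) : R := #|[set x | #|cachers Mc x| == t]|%:R / (N%:R * F%:R).
have lam_sum (g : nat -> R) : \sum_t lam t * g t = (\sum_x g #|cachers Mc x|) / (N%:R * F%:R).
  by rewrite sum_cachers_by_size mulr_suml; apply: eq_bigr => t _; rewrite mulrAC.
rewrite -lam_sum; apply: Conv_le_mix.
- by move=> t; rewrite /fbound divr_ge0 // subr_ge0 ler_nat leq_bin2l ?leq_subr.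
- by rewrite /fbound !(@bin_small _ K.+1) ?subrr ?mul0r // ltnS leq_subr.
- by move=> t; rewrite divr_ge0 // ltW.
- have := lam_sum (fun=> 1); under eq_bigr do rewrite mulr1; move=> ->.
  by rewrite sumr_const card_prod !card_ord natrM divff // gt_eqF.
- rewrite lam_sum -natr_sum sum_card_cachers natr_sum ler_pdivrMr //.
  apply: le_trans (ler_sum _ (fun k _ => cache_size k)) _.
  rewrite sumr_const card_ord -mulr_natl le_eqVlt; apply: predU1l.
  by field; rewrite gt_eqF ?ltr0n.
- by rewrite ler_pdivrMr ?ltr0n // ler_wpM2l.
Qed.

End CacheProfile.

Section Averaging.
Variables (R : realType) (N F K : nat) (Mc : prefetching N F K) (eps : R).

Lemma sum_orbit_Rstar_ge (d : gdemand N K) : (0 < N)%N -> (0 < F)%N -> 0 <= eps ->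
  (K`! * N`!)%:R * ((\sum_x fbound K (Ne (stats d)) #|cachers Mc x|) / (N%:R * F%:R)
                    - (F%:R^-1 + (Ne (stats d))%:R ^+ 2 * eps))
  <= \sum_(s : {perm 'I_K}) \sum_(p : {perm 'I_N}) Rstar Mc (act_demand p s d) eps.
Proof.
move=> N_gt0 F_gt0 eps_ge0.
have [nsel [usel [nsel_inj usel_req]]] := demand_representatives d.
have usel_inj : injective usel.
  by move=> i j e; apply: nsel_inj; apply: (@lift_inj _ ord0); rewrite -!usel_req e.
set c := F%:R^-1 + _.
have Rstar_ge (s : {perm 'I_K}) (p : {perm 'I_N}) :
    #|uncached_bits Mc (fun i => p (nsel i)) (fun i => s (usel i))|%:R / F%:R - c
    <= Rstar Mc (act_demand p s d) eps.
  apply: Rstar_ge_uncached => // i.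
  by rewrite ffunE permK usel_req lift_perm_lift.
apply: le_trans (ler_sum _ (fun s _ => ler_sum _ (fun p _ => Rstar_ge s p))).
under [X in _ <= X]eq_bigr do rewrite sumrB -mulr_suml sumr_const card_perms card_ord.
rewrite sumrB -mulr_suml sum_uncached_bits_fbound // sumr_const card_perms card_ord.
rewrite -mulr_natl -mulrnA natrM le_eqVlt; apply: predU1l.
by field; rewrite !gt_eqF ?ltr0n.
Qed.

Lemma Rstar_type_ge (st : seq nat) (a : R) : (exists d : gdemand N K, stats d = st) ->
  (forall d : gdemand N K, stats d = st ->
     (K`! * N`!)%:R * a <= \sum_(s : {perm 'I_K}) \sum_(p : {perm 'I_N})
                              Rstar Mc (act_demand p s d) eps) ->
  a <= Rstar_type Mc eps st.
Proof.
move=> [d0 d0_st] orbit_ge.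
have D_gt0 : (0 : R) < #|[set d : gdemand N K | stats d == st]|%:R.
  by rewrite ltr0n; apply/card_gt0P; exists d0; rewrite inE d0_st.
have KN_gt0 : (0 : R) < (K`! * N`!)%:R by rewrite ltr0n muln_gt0 !fact_gt0.
rewrite /Rstar_type ler_pdivlMr // -(ler_pM2l KN_gt0) -sum_type_act_demand.
rewrite mulrA mulr_natr cardsE -sumr_const; apply: ler_sum => d /eqP; exact: orbit_ge.
Qed.

End Averaging.

Unset Implicit Arguments.

Theorem lemma4 (R : realType) (N K F : nat) (M eps : R) (s : seq nat) :
  (0 < N)%N -> (0 < F)%N -> 0 <= M -> M <= N%:R -> 0 < eps ->
  (exists d : gdemand N K, stats d = s) ->
  forall Mc : prefetching N F K,
    (forall k, #|Mc k|%:R <= M * F%:R) ->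
    Conv K (fbound K (Ne s)) (K%:R * M / N%:R)
      - (F%:R^-1 + (Ne s)%:R ^+ 2 * eps)
    <= Rstar_type Mc eps s.
Proof.
move=> N_gt0 F_gt0 _ M_le eps_gt0 s_type Mc cache_size.
apply: le_trans (_ : (\sum_x fbound K (Ne s) #|cachers Mc x|) / (N%:R * F%:R)
                     - (F%:R^-1 + (Ne s)%:R ^+ 2 * eps) <= _).
  by rewrite lerD2r Conv_le_avg_fbound.
apply: Rstar_type_ge => // d <-.
exact: sum_orbit_Rstar_ge (ltW eps_gt0).
Qed.
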